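(* In the setting of the context, assume $N_{ij}^c\neq\emptyset$ for all $ij\in E$, $0<\lambda<1$, $r>0$, and $\beta_t=r\beta_{t+1}$ for all $t\ge1$. Let $M=\frac{4(c-1)^2e\lambda}{(1-\lambda)r^2}$. Assume that $\max_{ij\in E}|s_{ij}^{(1)}-s_{ij}^*|<\frac{1}{2(c-1)\beta_1}$ and that for all $t\ge1$, $$\max_{ij\in E,\ B_{ij}^c\neq\emptyset}\ \frac{1}{|B_{ij}^c|}\sum_{L\in B_{ij}^c}e^{-\beta_t s_L^*}(s_L^* )^2<\frac{1}{M\beta_t^2}.$$ Then the LongSync estimates satisfy $$\max_{ij\in E}|s_{ij}^{(t)}-s_{ij}^*|<\frac{r^{t-1}}{\beta_1}\quad\text{for all }t\ge1.$$
   Context: Setting: $d\ge2$, $c\ge3$, undirected simple graph $G=([n],E)$, ground truth $\boldsymbol{R}_i^*\in SO(d)$, arbitrary measurements $\boldsymbol{R}_{ij}\in SO(d)$ for $ij\in E$ with $\boldsymbol{R}_{ji}=\boldsymbol{R}_{ij}^T$, positive parameters $\beta_0,\beta_1,\dots$. Distance $\mathcal D(\boldsymbol{X},\boldsymbol{Y})=\sqrt{1-\operatorname{tr}(\boldsymbol{X}^T\boldsymbol{Y})/d}$. $\boldsymbol{R}_{ij}^*=\boldsymbol{R}_i^*\boldsymbol{R}_j^{*T}$, $s_{ij}^*=\mathcal D(\boldsymbol{R}_{ij},\boldsymbol{R}_{ij}^* )$; edge $e$ is clean if $s_e^*=0$. $N_{ij}^c$ is the set of sequences $L=(i,k_1,\dots,k_{c-2},j)$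 of pairwise distinct vertices with $ik_1,\dots,k_{c-2}j\in E$; $L\setminus\{ij\}$ denotes these $c-1$ edges; $s_L^*=\sum_{e\in L\setminus\{ij\}}s_e^*$. $\boldsymbol{R}_L=\boldsymbol{R}_{ik_1}\cdots\boldsymbol{R}_{k_{c-2}j}$, $d_L=\mathcal D(\boldsymbol{R}_L,\boldsymbol{R}_{ij})$. $G_{ij}^c$ = cycles in $N_{ij}^c$ whose edges in $L\setminus\{ij\}$ are all clean, $B_{ij}^c=N_{ij}^c\setminus G_{ij}^c$, $\lambda=\max_{ij\in E}|B_{ij}^c|/|N_{ij}^c|$. LongSync with $c$-cycles: $w_L^{(0)}=1$; for $t\ge0$, $s_{ij}^{(t)}=\big(\sum_{L\in N_{ij}^c}w_L^{(t)}d_L^2/\sum_{L\in N_{ij}^c}w_L^{(t)}\big)^{1/2}$ and $w_L^{(t+1)}=\prod_{e\in L\setminus\{ij\}}e^{-\beta_t s_e^{(t)}}$. *)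

From HB Require Import structures.
From mathcomp Require Import all_boot all_order all_algebra.
From mathcomp Require Import all_classical all_reals all_analysis.
Set Implicit Arguments. Unset Strict Implicit. Unset Printing Implicit Defensive.
Import Order.TTheory GRing.Theory Num.Theory.
Local Open Scope ring_scope.

Definition inSO (R : realType) (d : nat) (X : 'M[R]_d) : Prop :=
  X^T *m X = 1%:M /\ \det X = 1.

Definition Dist (R : realType) (d : nat) (X Y : 'M[R]_d) : R :=
  Num.sqrt (1 - \tr (X^T *m Y) / d%:R).

(* A c-cycle L = (i, k_1, ..., k_{c-2}, j) in N_ij^c is encoded by the
   tuple k of its c-2 intermediate vertices. *)
Definition cyc_vertices (n c : nat) (i j : 'I_n) (k : (c - 2).-tuple 'I_n)
  : seq 'I_n := i :: rcons (tval k) j.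

(* The c-1 edges of L \ {ij}, in order: (i,k_1), (k_1,k_2), ..., (k_{c-2},j). *)
Definition cyc_edges (n c : nat) (i j : 'I_n) (k : (c - 2).-tuple 'I_n)
  : seq ('I_n * 'I_n) :=
  let p := cyc_vertices i j k in zip p (behead p).

Definition Ncyc (n c : nat) (E : rel 'I_n) (i j : 'I_n)
  : {set (c - 2).-tuple 'I_n} :=
  [set k | uniq (cyc_vertices i j k) && path E i (rcons (tval k) j)].

Definition sstar (R : realType) (n d : nat) (Rm : 'I_n -> 'I_n -> 'M[R]_d)
  (Rst : 'I_n -> 'M[R]_d) (a b : 'I_n) : R :=
  Dist (Rm a b) (Rst a *m (Rst b)^T).

Definition sL (R : realType) (n c : nat) (s : 'I_n -> 'I_n -> R) (i j : 'I_n)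
  (k : (c - 2).-tuple 'I_n) : R :=
  \sum_(e <- cyc_edges i j k) s e.1 e.2.

Definition RL (R : realType) (n d c : nat) (Rm : 'I_n -> 'I_n -> 'M[R]_d)
  (i j : 'I_n) (k : (c - 2).-tuple 'I_n) : 'M[R]_d :=
  foldr (fun e A => Rm e.1 e.2 *m A) 1%:M (cyc_edges i j k).

Definition dL (R : realType) (n d c : nat) (Rm : 'I_n -> 'I_n -> 'M[R]_d)
  (i j : 'I_n) (k : (c - 2).-tuple 'I_n) : R :=
  Dist (RL Rm i j k) (Rm i j).

Definition Gcyc (R : realType) (n d c : nat) (E : rel 'I_n)
  (Rm : 'I_n -> 'I_n -> 'M[R]_d) (Rst : 'I_n -> 'M[R]_d) (i j : 'I_n)
  : {set (c - 2).-tuple 'I_n} :=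
  [set k in Ncyc c E i j |
     all (fun e => sstar Rm Rst e.1 e.2 == 0) (cyc_edges i j k)].

Definition Bcyc (R : realType) (n d c : nat) (E : rel 'I_n)
  (Rm : 'I_n -> 'I_n -> 'M[R]_d) (Rst : 'I_n -> 'M[R]_d) (i j : 'I_n)
  : {set (c - 2).-tuple 'I_n} :=
  Ncyc c E i j :\: Gcyc c E Rm Rst i j.

Definition lambda (R : realType) (n d c : nat) (E : rel 'I_n)
  (Rm : 'I_n -> 'I_n -> 'M[R]_d) (Rst : 'I_n -> 'M[R]_d) : R :=
  \big[Num.max/0]_(p : 'I_n * 'I_n | E p.1 p.2)
     ((#|Bcyc c E Rm Rst p.1 p.2|)%:R / (#|Ncyc c E p.1 p.2|)%:R).

Definition est (R : realType) (n d c : nat) (E : rel 'I_n)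
  (Rm : 'I_n -> 'I_n -> 'M[R]_d)
  (w : 'I_n -> 'I_n -> (c - 2).-tuple 'I_n -> R) (i j : 'I_n) : R :=
  Num.sqrt ((\sum_(k in Ncyc c E i j) w i j k * dL Rm i j k ^+ 2)
            / (\sum_(k in Ncyc c E i j) w i j k)).

Fixpoint longsync (R : realType) (n d c : nat) (E : rel 'I_n)
  (Rm : 'I_n -> 'I_n -> 'M[R]_d) (beta : nat -> R) (t : nat)
  : 'I_n -> 'I_n -> R :=
  match t with
  | 0 => @est R n d c E Rm (fun _ _ _ => 1)
  | t'.+1 =>
      let sp := longsync c E Rm beta t' in
      @est R n d c E Rm (fun i j k =>
        \prod_(e <- cyc_edges i j k) expR (- (beta t' * sp e.1 e.2)))
  end.

(* Along a cycle L the ground-truth rotations telescope to R*_i R*_j^T, and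
   D(X, Y) is a multiple of the Frobenius distance, which is invariant under
   orthogonal multiplication; hence |d_L - s*_ij| <= s*_L.  If the round-t
   estimates are within 1/(2(c-1)beta_t) of the truth, then every weight
   exp(-beta_t sum_e s_e^(t)) is within a factor e^(1/2) of exp(-beta_t s*_L).
   So the clean cycles carry total weight at least |G| e^(-1/2), while the
   corrupted ones add at most e^(1/2) sum_B exp(-beta_t s*_L) s*_L^2 to the
   weighted mean square deviation; with |B| <= lambda/(1-lambda) |G| and the
   hypothesis on B this bounds the round-(t+1) error by
   r/(2(c-1)beta_t) = 1/(2(c-1)beta_{t+1}).  Induction and
   beta_1 = r^(t-1) beta_t finish the proof. *)

From HB Require Import structures.
From mathcomp Require Import all_boot all_order all_algebra.
From mathcomp Require Import all_classical all_reals all_analysis.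
From mathcomp Require Import lra zify ring.
Import Order.TTheory GRing.Theory Num.Theory.
Set Implicit Arguments. Unset Strict Implicit. Unset Printing Implicit Defensive.
Local Open Scope ring_scope.

Section Frobenius.
Variables (R : rcfType) (d : nat).
Implicit Types (A B X Y : 'M[R]_d).

Definition frobdot A B : R := \tr (A^T *m B).

Definition frobnorm A : R := Num.sqrt (frobdot A A).

Lemma frobdotC A B : frobdot A B = frobdot B A.
Proof. by rewrite /frobdot -mxtrace_tr trmx_mul trmxK. Qed.

Lemma frobdotDl A B X : frobdot (A + B) X = frobdot A X + frobdot B X.
Proof. by rewrite /frobdot linearD /= mulmxDl mxtraceD. Qed.

Lemma frobdotZl a A B : frobdot (a *: A) B = a * frobdot A B.
Proof. by rewrite /frobdot linearZ /= -scalemxAl mxtraceZ. Qed.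

Lemma frobdotDr A B X : frobdot A (B + X) = frobdot A B + frobdot A X.
Proof. by rewrite frobdotC frobdotDl !(frobdotC A). Qed.

Lemma frobdotZr a A B : frobdot A (a *: B) = a * frobdot A B.
Proof. by rewrite frobdotC frobdotZl frobdotC. Qed.

Lemma frobdotNl A B : frobdot (- A) B = - frobdot A B.
Proof. by rewrite -scaleN1r frobdotZl mulN1r. Qed.

Lemma frobdotNr A B : frobdot A (- B) = - frobdot A B.
Proof. by rewrite frobdotC frobdotNl frobdotC. Qed.

Lemma frobdot_ge0 A : 0 <= frobdot A A.
Proof.
apply: sumr_ge0 => i _; rewrite mxE.
by apply: sumr_ge0 => k _; rewrite mxE -expr2 sqr_ge0.
Qed.

Lemma frobdot_lincomb u v A B :
  frobdot (u *: A + v *: B) (u *: A + v *: B) =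
  u ^+ 2 * frobdot A A + 2 * u * v * frobdot A B + v ^+ 2 * frobdot B B.
Proof. by rewrite !(frobdotDl, frobdotDr, frobdotZl, frobdotZr) (frobdotC B A); ring. Qed.

Lemma frobdot_CauchySchwarz A B :
  frobdot A B ^+ 2 <= frobdot A A * frobdot B B.
Proof.
set a := frobdot A A; set b := frobdot B B; set x := frobdot A B.
have a_ge0 : 0 <= a := frobdot_ge0 A; have b_ge0 : 0 <= b := frobdot_ge0 B.
have [b0|b_neq0] := eqVneq b 0; last first.
  have := frobdot_ge0 (b *: A + (- x) *: B).
  rewrite frobdot_lincomb -/a -/b -/x.
  have b_gt0 : 0 < b by rewrite lt0r b_neq0.
  nra.
have [->|x_neq0] := eqVneq x 0; first by rewrite b0; nra.
(* with [b = 0] the quadratic [a + 2 t x] in [t] is nonnegative, forcing [x = 0] *)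
have := frobdot_ge0 (1 *: A + (- ((a + 1) / (2 * x))) *: B).
rewrite frobdot_lincomb -/a -/b -/x b0.
have -> : 2 * 1 * - ((a + 1) / (2 * x)) * x = - (a + 1) by field.
nra.
Qed.

Lemma frobnorm_ge0 A : 0 <= frobnorm A.
Proof. exact: sqrtr_ge0. Qed.

Lemma frobnormN A : frobnorm (- A) = frobnorm A.
Proof. by rewrite /frobnorm frobdotNl frobdotNr opprK. Qed.

Lemma frobnormD A B : frobnorm (A + B) <= frobnorm A + frobnorm B.
Proof.
have CS : frobdot A B <= frobnorm A * frobnorm B.
  apply: le_trans (ler_norm _) _.
  rewrite -sqrtr_sqr -sqrtrM ?frobdot_ge0 // ler_sqrt ?mulr_ge0 ?frobdot_ge0 //.
  exact: frobdot_CauchySchwarz.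
rewrite -ler_sqr ?nnegrE ?addr_ge0 ?frobnorm_ge0 // sqrrD /frobnorm.
rewrite !sqr_sqrtr ?frobdot_ge0 // frobdotDl !frobdotDr (frobdotC B A).
move: CS; rewrite /frobnorm mulr2n; lra.
Qed.

Lemma frobnormB A B X : frobnorm (A - X) <= frobnorm (A - B) + frobnorm (B - X).
Proof. by have := frobnormD (A - B) (B - X); rewrite addrA subrK. Qed.

Lemma frobnorm_subC A B : frobnorm (A - B) = frobnorm (B - A).
Proof. by rewrite -frobnormN opprB. Qed.

Lemma ler_frobnorm_dist A B X :
  `|frobnorm (A - X) - frobnorm (B - X)| <= frobnorm (A - B).
Proof.
have := frobnormB A B X; have := frobnormB B A X; rewrite (frobnorm_subC B A).
by rewrite ler_norml => *; apply/andP; split; lra.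
Qed.

Definition orthmx A := A^T *m A = 1%:M.

Lemma orthmxC A : orthmx A -> A *m A^T = 1%:M.
Proof. exact: mulmx1C. Qed.

Lemma orthmx_tr A : orthmx A -> orthmx A^T.
Proof. by move=> oA; rewrite /orthmx trmxK orthmxC. Qed.

Lemma orthmx1 : orthmx 1%:M.
Proof. by rewrite /orthmx trmx1 mul1mx. Qed.

Lemma orthmxM A B : orthmx A -> orthmx B -> orthmx (A *m B).
Proof. by move=> oA oB; rewrite /orthmx trmx_mul mulmxA -(mulmxA B^T) oA mulmx1. Qed.

Lemma frobnormMl A X : orthmx A -> frobnorm (A *m X) = frobnorm X.
Proof. by move=> oA; rewrite /frobnorm /frobdot trmx_mul mulmxA -(mulmxA X^T) oA mulmx1. Qed.

Lemma frobnormMr A X : orthmx A -> frobnorm (X *m A) = frobnorm X.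
Proof.
move=> oA; rewrite /frobnorm /frobdot trmx_mul mxtrace_mulC -!mulmxA.
by rewrite (mulmxA A) orthmxC // mul1mx mxtrace_mulC.
Qed.

Lemma frobdot_orthmx A : orthmx A -> frobdot A A = d%:R.
Proof. by move=> oA; rewrite /frobdot oA mxtrace1. Qed.

End Frobenius.

Lemma Dist_frobnorm (R : realType) (d : nat) (X Y : 'M[R]_d) :
  (0 < d)%N -> orthmx X -> orthmx Y ->
  Dist X Y = Num.sqrt ((2 * d%:R)^-1) * frobnorm (X - Y).
Proof.
move=> d_gt0 oX oY; rewrite /Dist /frobnorm -sqrtrM ?invr_ge0 ?mulr_ge0 ?ler0n //.
rewrite frobdotDl !frobdotDr !frobdotNl !frobdotNr opprK (frobdotC Y X).
rewrite !frobdot_orthmx // -/(frobdot X Y).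
have d_neq0 : d%:R != 0 :> R by rewrite pnatr_eq0 -lt0n.
by congr Num.sqrt; field.
Qed.

Section MatrixChains.
Variables (R : rcfType) (d : nat) (T : eqType).
Implicit Types (F G : T -> 'M[R]_d) (es : seq T).

Definition mxchain F es : 'M[R]_d := foldr (fun e A => F e *m A) 1%:M es.

Lemma orthmx_chain F es : {in es, forall e, orthmx (F e)} -> orthmx (mxchain F es).
Proof.
elim: es => [|e es IH] oF /=; first exact: orthmx1.
apply: orthmxM; first exact/oF/mem_head.
by apply: IH => e' e'_es; apply/oF/mem_behead.
Qed.

Lemma frobnorm_chainB F G es :
  {in es, forall e, orthmx (F e)} -> {in es, forall e, orthmx (G e)} ->
  frobnorm (mxchain F es - mxchain G es) <= \sum_(e <- es) frobnorm (F e - G e).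
Proof.
elim: es => [|e es IH] oF oG.
  by rewrite big_nil subrr /frobnorm /frobdot mulmx0 mxtrace0 sqrtr0.
have oF' : {in es, forall e, orthmx (F e)} by move=> e' e'_es; apply/oF/mem_behead.
have oG' : {in es, forall e, orthmx (G e)} by move=> e' e'_es; apply/oG/mem_behead.
rewrite big_cons /=; apply: le_trans (frobnormB _ (G e *m mxchain F es) _) _.
rewrite -mulmxBl -mulmxBr frobnormMr ?frobnormMl; [|exact/oG/mem_head|exact: orthmx_chain].
by rewrite lerD2l IH.
Qed.

End MatrixChains.

Lemma mxchain_telescope (R : rcfType) (d : nat) (T : eqType) (Q : T -> 'M[R]_d) a p :
  (forall x, orthmx (Q x)) ->
  mxchain (fun e => Q e.1 *m (Q e.2)^T) (zip (a :: p) p) = Q a *m (Q (last a p))^T.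
Proof.
move=> oQ; elim: p a => [|b p IH] a /=; first by rewrite /mxchain /= orthmxC.
by rewrite /mxchain /= -/(mxchain _ _) IH -!mulmxA (mulmxA (Q b)^T) oQ mul1mx.
Qed.

Section WeightedMean.
Variables (R : rcfType) (I : finType).
Implicit Types (A : {set I}) (w f : I -> R).

Definition wmean A w f : R := (\sum_(k in A) w k * f k) / \sum_(k in A) w k.

Lemma wmean_sqrB A w f s : \sum_(k in A) w k != 0 ->
  wmean A w (fun k => (f k - s) ^+ 2) =
  wmean A w (fun k => f k ^+ 2) - 2 * s * wmean A w f + s ^+ 2.
Proof.
move=> W_neq0; rewrite /wmean.
have -> : \sum_(k in A) w k * (f k - s) ^+ 2 =
    \sum_(k in A) w k * f k ^+ 2 - 2 * s * \sum_(k in A) w k * f k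
    + s ^+ 2 * \sum_(k in A) w k.
  rewrite !mulr_sumr -sumrB -big_split /=.
  by apply: eq_bigr => k _; ring.
by field.
Qed.

Lemma wmean_ge0 A w f : {in A, forall k, 0 <= w k} -> {in A, forall k, 0 <= f k} ->
  0 <= wmean A w f.
Proof.
by move=> w_ge0 f_ge0; rewrite divr_ge0 ?sumr_ge0 // => k kA; rewrite ?mulr_ge0 ?w_ge0 ?f_ge0.
Qed.

Lemma sqr_wmean_le A w f : {in A, forall k, 0 <= w k} -> \sum_(k in A) w k != 0 ->
  wmean A w f ^+ 2 <= wmean A w (fun k => f k ^+ 2).
Proof.
move=> w_ge0 W_neq0.
have := wmean_ge0 (f := fun k => (f k - wmean A w f) ^+ 2) w_ge0 (fun k _ => sqr_ge0 _).
rewrite wmean_sqrB //; lra.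
Qed.

(* reverse triangle inequality in L^2(w) against the constant [s] *)
Lemma sqr_sqrt_wmean_subr_le A w f s :
  {in A, forall k, 0 <= w k} -> \sum_(k in A) w k != 0 -> 0 <= s ->
  (Num.sqrt (wmean A w (fun k => f k ^+ 2)) - s) ^+ 2 <=
  wmean A w (fun k => (f k - s) ^+ 2).
Proof.
move=> w_ge0 W_neq0 s_ge0; rewrite wmean_sqrB // sqrrB.
have Q_ge0 : 0 <= wmean A w (fun k => f k ^+ 2).
  by apply: wmean_ge0 => // k _; exact: sqr_ge0.
have m_le : wmean A w f <= Num.sqrt (wmean A w (fun k => f k ^+ 2)).
  apply: le_trans (ler_norm _) _.
  by rewrite -sqrtr_sqr ler_sqrt // sqr_wmean_le.
rewrite sqr_sqrtr //; nra.
Qed.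

End WeightedMean.

Section OneStep.
Variable R : realType.

Lemma expR_oppM_bounds (b x s : R) : 0 < b -> `|x - s| <= (2 * b)^-1 ->
  expR (- (1 / 2)) * expR (- (b * s)) <= expR (- (b * x)) <=
  expR (1 / 2) * expR (- (b * s)).
Proof.
move=> b_gt0 xs_le; have -> : - (b * x) = - (b * (x - s)) + - (b * s) by ring.
have : `|b * (x - s)| <= 1 / 2.
  rewrite normrM gtr0_norm //; apply: le_trans (ler_wpM2l (ltW b_gt0) xs_le) _.
  by rewrite invfM mulrCA mulfV ?gt_eqF // mulr1 div1r.
rewrite ler_norml expRD !ler_pM2r ?expR_gt0 // !ler_expR => /andP[? ?].
by apply/andP; split; lra.
Qed.

Section Weights.
Variables (I : finType) (N G : {set I}) (x sl : I -> R) (b : R).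
Hypothesis b_gt0 : 0 < b.
Hypothesis x_near : {in N, forall k, `|x k - sl k| <= (2 * b)^-1}.
Hypothesis sl_clean : {in N :&: G, forall k, sl k = 0}.

Let w k := expR (- (b * x k)).

Lemma sum_weights_ge : #|N :&: G|%:R * expR (- (1 / 2)) <= \sum_(k in N) w k.
Proof.
rewrite (big_setID G) /= -[X in X <= _]addr0 lerD //; last first.
  by apply: sumr_ge0 => k _; exact/ltW/expR_gt0.
rewrite mulr_natl -sumr_const; apply: ler_sum => k kNG.
have kN : k \in N by move: kNG; rewrite inE => /andP[].
have := expR_oppM_bounds b_gt0 (x_near kN); rewrite sl_clean // mulr0 oppr0 expR0 mulr1.
by case/andP.
Qed.

Variables (dl : I -> R) (s0 : R).
Hypothesis dl_near : {in N, forall k, `|dl k - s0| <= sl k}.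

Lemma wmean_sqr_dev_le : N :&: G != finset.set0 ->
  wmean N w (fun k => (dl k - s0) ^+ 2) <=
  expR 1 / #|N :&: G|%:R * \sum_(k in N :\: G) expR (- (b * sl k)) * sl k ^+ 2.
Proof.
move=> NG_neq0; set S := \sum_(k in N :\: G) _.
have nG_gt0 : 0 < #|N :&: G|%:R :> R by rewrite ltr0n card_gt0.
have S_ge0 : 0 <= S by apply: sumr_ge0 => k _; rewrite mulr_ge0 ?sqr_ge0 // ltW ?expR_gt0.
have W_ge := sum_weights_ge.
have W_gt0 : 0 < \sum_(k in N) w k.
  by apply: lt_le_trans W_ge; rewrite mulr_gt0 ?expR_gt0.
have num_le : \sum_(k in N) w k * (dl k - s0) ^+ 2 <= expR (1 / 2) * S.
  apply: (@le_trans _ _ (\sum_(k in N) w k * sl k ^+ 2)).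
    apply: ler_sum => k kN; apply: ler_wpM2l; first exact/ltW/expR_gt0.
    have sl_ge0 : 0 <= sl k := le_trans (normr_ge0 _) (dl_near kN).
    by rewrite -real_normK ?num_real // ler_sqr ?nnegrE ?dl_near.
  rewrite (big_setID G) /= big1 ?add0r => [|k kNG]; last by rewrite sl_clean // expr0n mulr0.
  rewrite /S mulr_sumr; apply: ler_sum => k; rewrite inE => /andP[_ kN].
  rewrite mulrA; apply: ler_wpM2r; first exact: sqr_ge0.
  by have /andP[] := expR_oppM_bounds b_gt0 (x_near kN).
have coef_ge0 : 0 <= expR 1 / #|N :&: G|%:R * S.
  by rewrite mulr_ge0 // divr_ge0 // ltW // expR_gt0.
rewrite /wmean ler_pdivrMr //.
apply: le_trans num_le (le_trans _ (ler_wpM2l coef_ge0 W_ge)).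
have -> : expR 1 = expR (1 / 2) * expR (1 / 2) :> R by rewrite -expRD; congr expR; field.
have hg : expR (1 / 2) * expR (- (1 / 2)) = 1 :> R by rewrite -expRD subrr expR0.
set h := expR (1 / 2) in hg *; set g := expR (- (1 / 2)) in hg *.
suff -> : h * h / #|N :&: G|%:R * S * (#|N :&: G|%:R * g) = h * S by [].
have -> : h * h / #|N :&: G|%:R * S * (#|N :&: G|%:R * g) = (h * g) * (h * S).
  by field; rewrite gt_eqF.
by rewrite hg mul1r.
Qed.

Lemma sqrt_wmean_dev_lt (lam r C : R) :
  N != finset.set0 -> 0 < r -> 0 < C -> 0 < lam < 1 -> 0 <= s0 ->
  #|N :\: G|%:R / #|N|%:R <= lam ->
  (N :\: G != finset.set0 ->
     (#|N :\: G|%:R)^-1 * (\sum_(k in N :\: G) expR (- (b * sl k)) * sl k ^+ 2)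
     < 1 / (4 * C ^+ 2 * expR 1 * lam / ((1 - lam) * r ^+ 2) * b ^+ 2)) ->
  `|Num.sqrt (wmean N w (fun k => dl k ^+ 2)) - s0| < r / (2 * C * b).
Proof.
move=> N_neq0 r_gt0 C_gt0 /andP[lam_gt0 lam_lt1] s0_ge0 ratio_le bad_small.
set nG := #|N :&: G|%:R : R; set nB := #|N :\: G|%:R : R in ratio_le bad_small *.
set S := \sum_(k in N :\: G) _ in bad_small *; set t := r / (2 * C * b).
have t_gt0 : 0 < t by rewrite divr_gt0 // !mulr_gt0.
have nN_gt0 : 0 < #|N|%:R :> R by rewrite ltr0n card_gt0.
have nN_split : #|N|%:R = nG + nB :> R by rewrite -natrD cardsID.
have nB_ge0 : 0 <= nB := ler0n _ _.
have nG_ge0 : 0 <= nG := ler0n _ _.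
have nB_le : nB * (1 - lam) <= lam * nG.
  by move: ratio_le; rewrite ler_pdivrMr // nN_split; lra.
have nG_gt0 : 0 < nG by nra.
have NG_neq0 : N :&: G != finset.set0 by rewrite -card_gt0 -(ltr0n R).
have W_neq0 : \sum_(k in N) w k != 0.
  by rewrite gt_eqF // (lt_le_trans _ (sum_weights_ge)) // mulr_gt0 ?expR_gt0.
have bound : expR 1 / nG * S < t ^+ 2.
  have [B0|B_neq0] := eqVneq (N :\: G) finset.set0.
    by rewrite /S B0 big_set0 mulr0 exprn_gt0.
  have nB_gt0 : 0 < nB by rewrite ltr0n card_gt0.
  set Mb := 4 * C ^+ 2 * expR 1 * lam / ((1 - lam) * r ^+ 2) * b ^+ 2 in bad_small.
  have Mb_gt0 : 0 < Mb.
    by rewrite mulr_gt0 ?exprn_gt0 // divr_gt0 ?mulr_gt0 ?exprn_gt0 ?expR_gt0 // subr_gt0.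
  have S_lt : S < 1 / Mb * nB.
    by rewrite -ltr_pdivrMr // mulrC; exact: bad_small.
  have t2E : t ^+ 2 = expR 1 / nG * (1 / Mb) * (lam * nG / (1 - lam)).
    by rewrite /t /Mb; field; rewrite !gt_eqF ?subr_gt0.
  have coef_gt0 : 0 < expR 1 / nG by rewrite divr_gt0 ?expR_gt0.
  apply: lt_le_trans (_ : _ < expR 1 / nG * (1 / Mb * nB)) _; first by rewrite ltr_pM2l.
  rewrite t2E -[X in _ <= X]mulrA !ler_pM2l ?divr_gt0 //.
  by rewrite ler_pdivlMr ?subr_gt0.
rewrite -ltr_sqr ?nnegrE ?normr_ge0 ?(ltW t_gt0) // real_normK ?num_real //.
apply: le_lt_trans (sqr_sqrt_wmean_subr_le _ _ _ s0_ge0) _ => //.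
  by move=> k _; exact/ltW/expR_gt0.
exact: le_lt_trans (wmean_sqr_dev_le NG_neq0) bound.
Qed.

End Weights.
End OneStep.

Lemma path_zip_rel (T : eqType) (e : rel T) a p :
  path e a p -> {in zip (a :: p) p, forall x, e x.1 x.2}.
Proof.
elim: p a => [|b p IH] a //= /andP[eab pb] x; rewrite inE => /orP[/eqP-> //|].
exact: IH.
Qed.

Lemma size_cyc_edges (n c : nat) (i j : 'I_n) (k : (c - 2).-tuple 'I_n) :
  (2 <= c)%N -> size (cyc_edges i j k) = (c - 1)%N.
Proof.
by move=> c_ge2; rewrite /cyc_edges /= size_zip /= size_rcons size_tuple minnE; lia.
Qed.

Lemma first_term_geometric (R : comRingType) (u : nat -> R) (r : R) :
  (forall t, (1 <= t)%N -> u t = r * u t.+1) ->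
  forall t, (1 <= t)%N -> u 1%N = r ^+ (t - 1) * u t.
Proof.
move=> u_rec [//|t] _; rewrite subSS subn0.
elim: t => [|t IH]; first by rewrite mul1r.
by rewrite IH u_rec // exprSr mulrA.
Qed.

Section LongSync.
Variables (R : realType) (n d c : nat) (E : rel 'I_n).
Variables (Rst : 'I_n -> 'M[R]_d) (Rm : 'I_n -> 'I_n -> 'M[R]_d) (beta : nat -> R).
Hypothesis d_gt0 : (0 < d)%N.
Hypothesis Rst_orth : forall i, orthmx (Rst i).
Hypothesis Rm_orth : forall i j, E i j -> orthmx (Rm i j).

Local Notation sst := (sstar Rm Rst).
Local Notation s := (longsync c E Rm beta).

Lemma cyc_edges_rel i j k :
  k \in Ncyc c E i j -> {in cyc_edges i j k, forall e, E e.1 e.2}.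
Proof. by rewrite inE => /andP[_]; exact: path_zip_rel. Qed.

Lemma sstarE a b : E a b ->
  sst a b = Num.sqrt ((2 * d%:R)^-1) * frobnorm (Rm a b - Rst a *m (Rst b)^T).
Proof.
move=> Eab; rewrite /sstar Dist_frobnorm //; first exact: Rm_orth.
by apply: orthmxM => //; exact: orthmx_tr.
Qed.

Lemma dL_sstar_le i j k : E i j -> k \in Ncyc c E i j ->
  `|dL Rm i j k - sst i j| <= sL sst i j k.
Proof.
move=> Eij kN; have Ek := cyc_edges_rel kN.
set X := RL Rm i j k; set Y := Rst i *m (Rst j)^T.
have oX : orthmx X by apply: orthmx_chain => e /Ek; exact: Rm_orth.
have XY : frobnorm (X - Y) <=
    \sum_(e <- cyc_edges i j k) frobnorm (Rm e.1 e.2 - Rst e.1 *m (Rst e.2)^T).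
  have <- : mxchain (fun e => Rst e.1 *m (Rst e.2)^T) (cyc_edges i j k) = Y.
    by rewrite mxchain_telescope // last_rcons.
  apply: frobnorm_chainB => [e /Ek|e _]; first exact: Rm_orth.
  by apply: orthmxM => //; exact: orthmx_tr.
rewrite /dL -/X (sstarE Eij) (Dist_frobnorm d_gt0 oX (Rm_orth Eij)).
rewrite /sL big_seq (eq_bigr _ (fun e ke => sstarE (Ek e ke))) -big_seq -mulr_sumr.
rewrite -mulrBr normrM ger0_norm ?sqrtr_ge0 //; apply: ler_wpM2l; first exact: sqrtr_ge0.
by apply: le_trans XY; rewrite (frobnorm_subC (Rm i j)); exact: ler_frobnorm_dist.
Qed.

Local Notation C := ((c - 1)%:R : R).

Lemma longsync_succE t i j :
  s t.+1 i j = Num.sqrt (wmean (Ncyc c E i j)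
    (fun k => expR (- (beta t * \sum_(e <- cyc_edges i j k) s t e.1 e.2)))
    (fun k => dL Rm i j k ^+ 2)).
Proof.
rewrite [LHS]/= /est /wmean.
have wE k : \prod_(e <- cyc_edges i j k) expR (- (beta t * s t e.1 e.2)) =
    expR (- (beta t * \sum_(e <- cyc_edges i j k) s t e.1 e.2)).
  by rewrite mulr_sumr -sumrN expR_sum.
by congr (Num.sqrt (_ / _)); apply: eq_bigr => k _; rewrite wE.
Qed.

Lemma longsync_dev_succ t r :
  (2 <= c)%N -> 0 < beta t -> 0 < r -> 0 < lambda c E Rm Rst < 1 ->
  (forall i j, E i j -> Ncyc c E i j != finset.set0) ->
  (forall i j, E i j -> `|s t i j - sst i j| < 1 / (2 * C * beta t)) ->
  (forall i j, E i j -> Bcyc c E Rm Rst i j != finset.set0 ->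
     (#|Bcyc c E Rm Rst i j|%:R)^-1 *
       (\sum_(k in Bcyc c E Rm Rst i j)
          expR (- (beta t * sL sst i j k)) * sL sst i j k ^+ 2)
     < 1 / (4 * C ^+ 2 * expR 1 * lambda c E Rm Rst
            / ((1 - lambda c E Rm Rst) * r ^+ 2) * beta t ^+ 2)) ->
  forall i j, E i j -> `|s t.+1 i j - sst i j| < r / (2 * C * beta t).
Proof.
move=> c_ge2 bt_gt0 r_gt0 lam01 N_neq0 dev_lt bad_small i j Eij.
have C_gt0 : 0 < C by rewrite ltr0n; lia.
rewrite longsync_succE.
apply: (@sqrt_wmean_dev_lt _ _ _ (Gcyc c E Rm Rst i j) _ (sL sst i j)
  _ _ _ _ _ _ _ (lambda c E Rm Rst)) => //.
- move=> k kN; have Ek := cyc_edges_rel kN.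
  rewrite /sL -sumrB; apply: le_trans (ler_norm_sum _ _ _) _.
  apply: le_trans (_ : \sum_(e <- cyc_edges i j k) 1 / (2 * C * beta t) <= _).
    by rewrite !big_seq; apply: ler_sum => e ke; exact/ltW/dev_lt/Ek.
  rewrite big_const_seq count_predT iter_addr_0 size_cyc_edges // -[_ *+ _]mulr_natr.
  suff -> : 1 / (2 * C * beta t) * C = (2 * beta t)^-1 by [].
  by field; rewrite !gt_eqF.
- move=> k; rewrite !inE => /andP[_ /andP[_ /allP clean]].
  by rewrite /sL big_seq big1 // => e /clean /eqP.
- by move=> k; exact: dL_sstar_le.
- exact: N_neq0.
- exact: sqrtr_ge0.
- exact: (le_bigmax_cond 0 (j := (i, j)) (P := fun p => E p.1 p.2)
    (fun p => #|Bcyc c E Rm Rst p.1 p.2|%:R / #|Ncyc c E p.1 p.2|%:R : R) Eij).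
- exact: bad_small.
Qed.

End LongSync.

Theorem mainTheorem4 (R : realType) (n d c : nat) (E : rel 'I_n)
  (Rst : 'I_n -> 'M[R]_d) (Rm : 'I_n -> 'I_n -> 'M[R]_d)
  (beta : nat -> R) (r : R) :
  (2 <= d)%N -> (3 <= c)%N ->
  irreflexive E -> symmetric E ->
  (forall i, inSO (Rst i)) ->
  (forall i j, E i j -> inSO (Rm i j)) ->
  (forall i j, E i j -> Rm j i = (Rm i j)^T) ->
  (forall t, 0 < beta t) ->
  (forall i j, E i j -> Ncyc c E i j != finset.set0) ->
  0 < lambda c E Rm Rst < 1 ->
  0 < r ->
  (forall t, (1 <= t)%N -> beta t = r * beta t.+1) ->
  let M := 4 * ((c - 1)%:R) ^+ 2 * expR 1 * lambda c E Rm Rst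
           / ((1 - lambda c E Rm Rst) * r ^+ 2) in
  let sst := sstar Rm Rst in
  let s := longsync c E Rm beta in
  (forall i j, E i j ->
     `|s 1%N i j - sst i j| < 1 / (2 * (c - 1)%:R * beta 1%N)) ->
  (forall t, (1 <= t)%N -> forall i j, E i j ->
     Bcyc c E Rm Rst i j != finset.set0 ->
     (#|Bcyc c E Rm Rst i j|%:R)^-1 *
       (\sum_(k in Bcyc c E Rm Rst i j)
          expR (- (beta t * sL sst i j k)) * sL sst i j k ^+ 2)
     < 1 / (M * beta t ^+ 2)) ->
  forall t, (1 <= t)%N -> forall i j, E i j ->
    `|s t i j - sst i j| < r ^+ (t - 1) / beta 1%N.
Proof.
move=> d_ge2 c_ge3 _ _ Rst_SO Rm_SO _ beta_gt0 N_neq0 lam01 r_gt0 beta_rec.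
move=> M sst s dev1 bad_small.
have d_gt0 : (0 < d)%N by apply: leq_trans d_ge2.
have Rst_orth i : orthmx (Rst i) by case: (Rst_SO i).
have Rm_orth i j : E i j -> orthmx (Rm i j) by case/Rm_SO.
have c_ge2 : (2 <= c)%N by apply: ltnW.
have C_ge1 : 1 <= (c - 1)%:R :> R by rewrite ler1n; lia.
have dev t : (1 <= t)%N -> forall i j, E i j ->
    `|s t i j - sst i j| < 1 / (2 * (c - 1)%:R * beta t).
  elim: t => [//|[_|t IH]] _; first exact: dev1.
  have -> : 1 / (2 * (c - 1)%:R * beta t.+2) = r / (2 * (c - 1)%:R * beta t.+1).
    by rewrite (beta_rec t.+1) //; field; rewrite !gt_eqF //; lra.
  exact: longsync_dev_succ (IH _) (bad_small _ _).
move=> t t_ge1 i j Eij; apply: lt_le_trans (dev t t_ge1 i j Eij) _.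
have bt_gt0 := beta_gt0 t; have rt_gt0 : 0 < r ^+ (t - 1) by rewrite exprn_gt0.
have -> : r ^+ (t - 1) / beta 1%N = 1 / beta t.
  by rewrite (first_term_geometric beta_rec t_ge1); field; rewrite !gt_eqF.
rewrite ler_pdivrMr ?mulr_gt0 //; last lra.
have -> : 1 / beta t * (2 * (c - 1)%:R * beta t) = 2 * (c - 1)%:R by field; rewrite gt_eqF.
lra.
Qed.
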